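(* Let $N\ge1$, $1\le C\le N$, $T\ge 1$ be integers and $x^T\in[N]^T$ any request sequence. For every integer $k\ge 0$, $$T\big(\tilde{\mu}_k(x^T)-\pi^{\textsc{LZ}}(x^T)\big)\le \delta\big(c(T),L_T^{*,LZ}\big)+k\,c(T),$$ where $\delta(B,l)=\sqrt{2BCl\ln(Ne/C)}+CB\ln(Ne/C)$, $c(T)$ is the total number of nodes of the Lempel–Ziv parse tree after the $T$ requests (which is $O(T\log N/\log T)$), and $L_T^{*,LZ}$ is the minimum number of cache misses on $x^T$ of an offline prefetcher whose state at each round is the current node of the same Lempel–Ziv tree process and which caches a fixed set of $C$ files at each node.
   Context: Caching setting: a library of $N$ unit-sized files $[N]$ and a cache holding $C$ files; in round $t$ a (possibly random) set of $C$ files is cached, then $x_t\in[N]$ is requested, giving a hit (reward 1) if $x_t$ is cached and 0 otherwise. Hit rate = expected number of hits divided by $T$. A $k$-th order Markov prefetcher is a finite-state prefetcher with state set $[N]^k$ whose state at round $t$ is $(x_{t-1},\dots,x_{t-k})$ and which caches a set $f(s)$ of $C$ files depending only on the current state $s$; $\tilde\mu_k(x^T)$ is the maximum hit rate on $x^T$ over all such prefetching functions $f$. The LZ prefetcher: maintain an $N$-ary tree, initially a root with $N$ leaf children, and a current node, initially the root. At each round the current node is the state; each node runs its own independent copy of the \textsc{Sage} caching policy, fed only with requests arriving while that node is current, and the cache is chosen by the copy at the current node. After request $x_t$, move to the child labeled $x_t$; if that child is a leaf, make it an internal node by adding $N$ leaf children and return the current node to the root. $\pi^{\textsc{LZ}}(x^T)$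 is its hit rate. \textsc{Sage} policy: with learning rate $\eta>0$ and $R(i)$ the number of past requests (in its own stream) for file $i$, set $w(i)=\exp(\eta R(i))$ and marginals $p(i)=w(i)e_{C-1}(\mathbf w_{-i})/e_C(\mathbf w)$ ($e_m$ the elementary symmetric polynomial of order $m$, $\mathbf w_{-i}$ omitting coordinate $i$; these are the file-inclusion marginals of Hedge over all $C$-subsets of $[N]$ with reward $\mathbb 1(x_t\in A)$), and cache a random $C$-set with these marginals via Madow's systematic sampling (draw $U\sim\mathrm{Unif}[0,1]$, $P_0=0$, $P_i=P_{i-1}+p(i)$, select for each $m=0,\dots,C-1$ the $j$ with $P_{j-1}\le U+m\le P_j$). The learning rate is tuned adaptively so that on any stream of length $n$ its expected hits are at least those of the best fixed $C$-set minus $\sqrt{2Cl^*\ln(Ne/C)}+C\ln(Ne/C)$, $l^*$ being the misses of the best fixed $C$-set. *)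

From HB Require Import structures.
From mathcomp Require Import all_boot all_order all_algebra.
From mathcomp Require Import all_classical all_reals all_analysis.
Set Implicit Arguments. Unset Strict Implicit. Unset Printing Implicit Defensive.
Import Order.TTheory GRing.Theory Num.Theory.
Local Open Scope classical_set_scope.
Local Open Scope ring_scope.

(* Files are 'I_N (0-indexed). A request sequence is x : seq 'I_N. *)

(* elementary symmetric polynomial of order m of the weights w restricted
   to the coordinates in S  (S = setT: e_m(w);  S = ~:[set i]: e_m(w_{-i})) *)
Definition esym (R : realType) (N : nat) (w : 'I_N -> R) (S : {set 'I_N}) (m : nat) : R :=
  \sum_(A : {set 'I_N} | (A \subset S) && (#|A| == m)) \prod_(i in A) w i.

Definition sage_weight (R : realType) (N : nat) (eta : seq 'I_N -> R)
  (h : seq 'I_N) (i : 'I_N) : R := expR (eta h * (count_mem i h)%:R).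

Definition sage_marg (R : realType) (N C : nat) (eta : seq 'I_N -> R)
  (h : seq 'I_N) (i : 'I_N) : R :=
  sage_weight eta h i * esym (sage_weight eta h) (~: finset.set1 i) C.-1
    / esym (sage_weight eta h) (finset.setT) C.

(* Madow's systematic sampling: cumulative sums P_{j-1} and P_j *)
Definition Pprev (R : realType) (N : nat) (p : 'I_N -> R) (j : 'I_N) : R :=
  \sum_(i : 'I_N | (i < j)%N) p i.
Definition Pcum (R : realType) (N : nat) (p : 'I_N -> R) (j : 'I_N) : R :=
  \sum_(i : 'I_N | (i <= j)%N) p i.

Definition madow_selects (R : realType) (N C : nat) (p : 'I_N -> R) (u : R) (y : 'I_N) : Prop :=
  exists2 m : nat, (m < C)%N & Pprev p y <= u + m%:R <= Pcum p y.

(* probability (U ~ Unif[0,1]) that y is in the cache sampled by Madow *)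
Definition hit_prob (R : realType) (N C : nat) (p : 'I_N -> R) (y : 'I_N) : R :=
  fine (lebesgue_measure ([set u : R | 0 <= u <= 1] `&` [set u | madow_selects C p u y])).

Definition sage_hits (R : realType) (N C : nat) (eta : seq 'I_N -> R) (s : seq 'I_N) : R :=
  \sum_(p <- zip [seq take t s | t <- iota 0 (size s)] s)
     hit_prob C (sage_marg C eta p.1) p.2.

Definition best_fixed (N C : nat) (s : seq 'I_N) : nat :=
  \max_(A : {set 'I_N} | #|A| == C) count (mem A) s.

Definition lnNeC (R : realType) (N C : nat) : R := ln (N%:R * expR 1 / C%:R).

Definition delta (R : realType) (N C : nat) (B l : R) : R :=
  Num.sqrt (2 * B * C%:R * l * lnNeC R N C) + C%:R * B * lnNeC R N C.

Definition sage_guarantee (R : realType) (N C : nat) (eta : seq 'I_N -> R) : Prop :=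
  forall s : seq 'I_N,
    (best_fixed C s)%:R - sage_hits C eta s
      <= delta N C 1 (size s - best_fixed C s)%:R.

(* nodes are paths from the root (seq of labels); the tree is stored as the
   list of its internal nodes (each internal node has N leaf/internal children) *)
Definition lz_init (N : nat) : seq (seq 'I_N) * seq 'I_N := ([:: [::]], [::]).

Definition lz_step (N : nat) (st : seq (seq 'I_N) * seq 'I_N) (y : 'I_N)
  : seq (seq 'I_N) * seq 'I_N :=
  let nxt := rcons st.2 y in
  if nxt \in st.1 then (st.1, nxt)        (* child is internal: descend *)
  else (nxt :: st.1, [::]).              (* child is a leaf: expand it, back to root *)

Fixpoint lz_states_from (N : nat) (st : seq (seq 'I_N) * seq 'I_N) (s : seq 'I_N)
  : seq (seq 'I_N) :=
  if s is y :: s' then st.2 :: lz_states_from (lz_step st y) s' else [::].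

Definition lz_states (N : nat) (x : seq 'I_N) := lz_states_from (lz_init N) x.

(* c(T): number of nodes of the LZ parse tree after all requests of x
   (the created, i.e. internal, nodes, root included) *)
Definition lz_nodes (N : nat) (x : seq 'I_N) : nat := size (foldl (@lz_step N) (lz_init N) x).1.

(* expected hits of the LZ prefetcher: at round t with current node v, the
   Sage copy of v has seen the requests of the earlier rounds at which v was current *)
Definition lz_hits (R : realType) (N C : nat) (eta : seq 'I_N -> R) (x : seq 'I_N) : R :=
  let z := zip (lz_states x) x in
  \sum_(p <- zip (iota 0 (size z)) z)
     hit_prob C (sage_marg C eta [seq q.2 | q <- take p.1 z & q.1 == p.2.1]) p.2.2.

Definition lz_fixed_misses (N : nat) (g : seq 'I_N -> {set 'I_N}) (x : seq 'I_N) : nat :=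
  count (fun p : seq 'I_N * 'I_N => p.2 \notin g p.1) (zip (lz_states x) x).

Definition is_LZ_offline_min (N C : nat) (x : seq 'I_N) (L : nat) : Prop :=
  (exists2 g : seq 'I_N -> {set 'I_N}, (forall v, #|g v| = C) & lz_fixed_misses g x = L) /\
  (forall g : seq 'I_N -> {set 'I_N}, (forall v, #|g v| = C) -> (L <= lz_fixed_misses g x)%N).

(* state at round t: (x_{t-1}, ..., x_{t-k}) (only the available ones for t <= k) *)
Definition markov_states (N k : nat) (x : seq 'I_N) : seq (seq 'I_N) :=
  [seq take k (rev (take t x)) | t <- iota 0 (size x)].

Definition markov_hits (N k : nat) (f : seq 'I_N -> {set 'I_N}) (x : seq 'I_N) : nat :=
  count (fun p : seq 'I_N * 'I_N => p.2 \in f p.1) (zip (markov_states k x) x).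

From HB Require Import structures.
From mathcomp Require Import all_boot all_order all_algebra.
From mathcomp Require Import all_classical all_reals all_analysis.
From mathcomp Require Import zify ring lra.
Set Implicit Arguments. Unset Strict Implicit. Unset Printing Implicit Defensive.
Import Order.TTheory GRing.Theory Num.Theory.

(* The LZ prefetcher runs an independent copy of Sage at every node of the
   parse tree, so its regret against the offline prefetcher caching a fixed set
   at each node is the sum of the per-node Sage regrets; by Cauchy-Schwarz over
   the at most c(T) visited nodes these add up to delta(c(T), L).  A k-th order
   Markov prefetcher f is beaten by the node prefetcher v |-> f (last k symbols
   of v) except when the two states differ: the current node is a suffix of the
   history, so this only happens at depth < k, at most k times per phrase, hence
   at most k c(T) times. *)

Lemma take_rev_suffix (T : eqType) k (v h : seq T) : suffix v h -> (k <= size v)%N ->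
  take k (rev h) = take k (rev v).
Proof. by move=> /suffixP[w ->] kv; rewrite rev_cat takel_cat ?size_rev. Qed.

Section LempelZivTree.
Variable N : nat.
Implicit Types (st : seq (seq 'I_N) * seq 'I_N) (s h x : seq 'I_N).

Lemma size_lz_states_from st s : size (lz_states_from st s) = size s.
Proof. by elim: s st => //= y s IH st; rewrite IH. Qed.

Lemma lz_tree_grows st s : {subset st.1 <= (foldl (@lz_step N) st s).1}.
Proof.
elim: s st => [|y s IH] st v hv //=; apply: IH.
by rewrite /lz_step; case: ifP => _ //=; rewrite inE hv orbT.
Qed.

Lemma lz_states_from_in_tree st s : [::] \in st.1 -> st.2 \in st.1 ->
  {subset lz_states_from st s <= (foldl (@lz_step N) st s).1}.
Proof.
elim: s st => [|y s IH] st h0 h2 v //=; rewrite inE => /orP[/eqP->|].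
  by apply: lz_tree_grows; rewrite /lz_step; case: ifP => _ //=; rewrite inE h2 orbT.
by apply: IH; rewrite /lz_step; case: ifP => //= _; rewrite !inE ?eqxx ?h0 ?orbT.
Qed.

Lemma size_undup_lz_states x : (size (undup (lz_states x)) <= lz_nodes x)%N.
Proof.
apply: uniq_leq_size => [|v]; first exact: undup_uniq.
by rewrite mem_undup; apply: lz_states_from_in_tree; rewrite inE.
Qed.

(* Each phrase spends at most k rounds at depth < k, and all phrases but the
   current one have created a node. *)
Lemma count_short_lz_states_from k st s :
  (count (fun v => size v < k) (lz_states_from st s) + k * size st.1
     + minn (size st.2) k <= k * (size (foldl (@lz_step N) st s).1).+1)%N.
Proof.
elim: s st => [|y s IH] st /=; first lia.
have := IH (lz_step st y); rewrite /lz_step; case: ifP => _ /=.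
  by rewrite size_rcons; lia.
by rewrite mulnS; lia.
Qed.

Lemma count_short_lz_states k x :
  (count (fun v => size v < k) (lz_states x) <= k * lz_nodes x)%N.
Proof.
have := count_short_lz_states_from k (lz_init N) x.
by rewrite /lz_nodes /lz_states /= muln1 mulnS; lia.
Qed.

Definition markov_states_from k h s :=
  [seq take k (rev (h ++ take t s)) | t <- iota 0 (size s)].

Lemma markov_states_from_cons k h y s :
  markov_states_from k h (y :: s)
  = take k (rev h) :: markov_states_from k (rcons h y) s.
Proof.
rewrite /markov_states_from /= cats0; congr (_ :: _).
by rewrite -[1%N]addn0 iotaDl -map_comp; apply: eq_map => t /=; rewrite cat_rcons.
Qed.

(* The current node is always a suffix of the history, so the two states agree
   as soon as the node has depth at least k. *)
Lemma count_markov_lz_mismatch_from k st h s : suffix st.2 h ->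
  (count (fun p => p.1 != take k (rev p.2))
     (zip (markov_states_from k h s) (lz_states_from st s))
   <= count (fun v => size v < k) (lz_states_from st s))%N.
Proof.
elim: s st h => [|y s IH] st h sfx //.
rewrite markov_states_from_cons /=; apply: leq_add; last first.
  apply: IH; rewrite /lz_step; case: ifP => _ /=; last exact: suffix0s.
  by rewrite suffix_rcons eqxx.
case: (ltnP (size st.2) k) => [|kst]; first by case: (_ != _).
by rewrite (take_rev_suffix sfx kst) eqxx.
Qed.

Lemma count_markov_lz_mismatch k x :
  (count (fun p => p.1 != take k (rev p.2)) (zip (markov_states k x) (lz_states x))
   <= k * lz_nodes x)%N.
Proof.
apply: leq_trans (count_short_lz_states k x).
exact: (@count_markov_lz_mismatch_from k (lz_init N) [::] x (suffix0s _)).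
Qed.

End LempelZivTree.

Lemma count_zip_mismatch (A B T : eqType) (P : A -> T -> bool) (h : B -> A)
    (a : seq A) (b : seq B) (s : seq T) :
  size a = size s -> size b = size s ->
  (count (fun p => P p.1 p.2) (zip a s)
   <= count (fun p => P (h p.1) p.2) (zip b s) + count (fun p => p.1 != h p.2) (zip a b))%N.
Proof.
elim: s a b => [|y s IH] [|u a] [|w b] //= [ea] [eb].
have := IH a b ea eb; case: (eqVneq u (h w)) => [->|_] /=; lia.
Qed.

Lemma markov_hits_le_lz N k (f : seq 'I_N -> {set 'I_N}) x :
  (markov_hits k f x
   <= count (fun p => p.2 \in f (take k (rev p.1))) (zip (lz_states x) x) + k * lz_nodes x)%N.
Proof.
apply: leq_trans (leq_add (leqnn _) (count_markov_lz_mismatch k x)).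
apply: (count_zip_mismatch (fun v a => a \in f v) (fun v => take k (rev v))).
  by rewrite size_map size_iota.
exact: size_lz_states_from.
Qed.

Local Open Scope ring_scope.

Section Substreams.
Variables S T : eqType.
Implicit Types (z : seq (S * T)) (V : seq S).

Definition substream z v : seq T := [seq q.2 | q <- z & q.1 == v].

Lemma count_substream (P : S -> pred T) V z : uniq V -> {subset unzip1 z <= V} ->
  count (fun q => P q.1 q.2) z = (\sum_(v <- V) count (P v) (substream z v))%N.
Proof.
move=> uV; elim: z => [|q z IH] sub /=; first by rewrite big1.
have qV : q.1 \in V by apply: sub; rewrite inE eqxx.
rewrite IH => [|v zv]; last by apply: sub; rewrite inE zv orbT.
rewrite [RHS](bigD1_seq q.1) //= [in LHS](bigD1_seq q.1) //=.
rewrite {3}/substream /= eqxx /= addnA; congr (_ + _)%N.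
by apply: eq_bigr => v; rewrite eq_sym /substream /= => /negPf ->.
Qed.

Definition online_sum (R : nmodType) (F : seq T -> T -> R) (s : seq T) : R :=
  \sum_(p <- zip [seq take t s | t <- iota 0 (size s)] s) F p.1 p.2.

Lemma online_sum_rcons (R : nmodType) (F : seq T -> T -> R) s a :
  online_sum F (rcons s a) = online_sum F s + F s a.
Proof.
rewrite /online_sum size_rcons -addn1 iotaD map_cat -cats1 zip_cat; last first.
  by rewrite size_map size_iota.
rewrite big_cat big_seq1 /= take_size_cat //; congr (_ + _).
congr (\sum_(p <- zip _ _) _); apply/eq_in_map => t; rewrite mem_iota => /andP[_ ts].
by rewrite takel_cat // ltnW.
Qed.

(* Each node's copy of the online algorithm sees exactly its own substream. *)
Lemma online_sum_substream (R : nmodType) (F : seq T -> T -> R) V z :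
  uniq V -> {subset unzip1 z <= V} ->
  \sum_(v <- V) online_sum F (substream z v)
  = \sum_(p <- zip (iota 0 (size z)) z) F (substream (take p.1 z) p.2.1) p.2.2.
Proof.
move=> uV; elim/last_ind: z => [|z q IH] sub.
  by rewrite big_nil big1 // => v _; rewrite /online_sum big_nil.
have qV : q.1 \in V by apply: sub; rewrite /unzip1 map_rcons mem_rcons inE eqxx.
rewrite size_rcons -addn1 iotaD -cats1 zip_cat ?size_iota // big_cat big_seq1 /=.
rewrite take_size_cat //.
have -> : \sum_(p <- zip (iota 0 (size z)) z)
            F (substream (take p.1 (z ++ [:: q])) p.2.1) p.2.2
        = \sum_(p <- zip (iota 0 (size z)) z) F (substream (take p.1 z) p.2.1) p.2.2.
  rewrite big_seq_cond [RHS]big_seq_cond; apply: eq_bigr => [[i p]] /andP[ip _] /=.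
  have : i \in unzip1 (zip (iota 0 (size z)) z) by exact: (map_f fst ip).
  by rewrite unzip1_zip ?size_iota // mem_iota => /andP[_ iz]; rewrite takel_cat // ltnW.
rewrite -IH => [|v zv]; last first.
  by apply: sub; rewrite /unzip1 map_rcons mem_rcons inE zv orbT.
rewrite (bigD1_seq q.1) //= [in RHS](bigD1_seq q.1) //= -addrA [_ + F _ _]addrC addrA.
congr (_ + _); last first.
  apply: eq_bigr => v; rewrite eq_sym => /negPf qv.
  by rewrite /substream filter_cat /= qv cats0.
by rewrite /substream filter_cat /= eqxx /= map_cat cats1 online_sum_rcons.
Qed.

End Substreams.

Section BestFixedSet.
Variables N C : nat.
Implicit Types (A : {set 'I_N}) (s : seq 'I_N).

Lemma count_le_best_fixed A s : #|A| = C -> (count (mem A) s <= best_fixed C s)%N.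
Proof.
move=> cA; apply: (@leq_bigmax_cond _ (fun B : {set 'I_N} => #|B| == C)
  (fun B => count (mem B) s) A).
by rewrite cA.
Qed.

Lemma best_fixed_misses_le A s : #|A| = C ->
  (size s - best_fixed C s <= count (fun a => a \notin A) s)%N.
Proof.
move=> /(count_le_best_fixed s) hA.
rewrite -(count_predC (mem A) s) (@eq_count _ (predC (mem A)) (fun a => a \notin A)) //.
lia.
Qed.

End BestFixedSet.

Section Regret.
Variable R : realType.

Lemma lnNeC_ge0 N C : (1 <= C <= N)%N -> 0 <= lnNeC R N C.
Proof.
move=> /andP[C1 CN]; rewrite /lnNeC; apply: ln_ge0.
have e1 : (1 : R) <= expR 1 by rewrite -expR0 ler_expR.
have C0 : (0 : R) < C%:R by rewrite ltr0n.
have : (C%:R : R) <= N%:R by rewrite ler_nat.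
by rewrite ler_pdivlMr // mul1r; nra.
Qed.

Lemma sqr_sum_le_size (I : Type) (V : seq I) (a : I -> R) :
  (\sum_(v <- V) a v) ^+ 2 <= (size V)%:R * \sum_(v <- V) a v ^+ 2.
Proof.
elim: V => [|u V IH]; first by rewrite !big_nil expr0n mul0r.
rewrite !big_cons /= -natr1.
have Y0 : 0 <= \sum_(v <- V) a v ^+ 2 by apply: sumr_ge0 => v _; exact: sqr_ge0.
move: (size V)%:R (ler0n R (size V)) (\sum_(v <- V) a v) (\sum_(v <- V) a v ^+ 2) Y0 IH.
move=> n n0 S Y Y0 IH; have [n_eq0|n_neq0] := eqVneq n 0.
  move: IH; rewrite n_eq0 mul0r add0r mul1r => IH.
  have -> : S = 0 by nra.
  by rewrite addr0 lerDl.
(* n (n a^2 + Y - 2 a S) = (n a - S)^2 + (n Y - S^2) *)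
have : 0 <= n * (n * a u ^+ 2 + Y - 2 * a u * S).
  by have := sqr_ge0 (n * a u - S); nra.
rewrite pmulr_rge0 ?lt_def ?n_neq0 // => cross.
rewrite sqrrD mulrDl mul1r mulrDr; nra.
Qed.

Lemma sum_sqrt_le (I : Type) (V : seq I) (y : I -> R) : (forall v, 0 <= y v) ->
  \sum_(v <- V) Num.sqrt (y v) <= Num.sqrt ((size V)%:R * \sum_(v <- V) y v).
Proof.
move=> y0; have S0 : 0 <= \sum_(v <- V) Num.sqrt (y v).
  by apply: sumr_ge0 => v _; apply: sqrtr_ge0.
rewrite -(ger0_norm S0) -sqrtr_sqr ler_sqrt ?mulr_ge0 ?sumr_ge0 //.
by under [X in _ <= _ * X]eq_bigr => v _ do rewrite -(sqr_sqrtr (y0 v)); exact: sqr_sum_le_size.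
Qed.

Variables N C : nat.
Hypothesis lnNeC_nneg : 0 <= lnNeC R N C.

Lemma ler_delta (B B' l l' : R) : 0 <= B <= B' -> 0 <= l <= l' ->
  delta N C B l <= delta N C B' l'.
Proof.
move=> /andP[B0 BB] /andP[l0 ll]; rewrite /delta.
have C0 : (0 : R) <= C%:R by rewrite ler0n.
apply: lerD; last by rewrite ler_wpM2r // ler_wpM2l.
rewrite ler_sqrt ?mulr_ge0 ?(le_trans B0 BB) ?(le_trans l0 ll) //.
by rewrite ler_wpM2r // ler_pM ?mulr_ge0 // ler_wpM2r // ler_wpM2l.
Qed.

Lemma sum_delta_le (I : Type) (V : seq I) (l : I -> R) : (forall v, 0 <= l v) ->
  \sum_(v <- V) delta N C 1 (l v) <= delta N C (size V)%:R (\sum_(v <- V) l v).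
Proof.
move=> l0; rewrite /delta big_split /= big_const_seq count_predT iter_addr_0.
set K := lnNeC R N C; apply: lerD; last by rewrite -[_ *+ size V]mulr_natr mulr1 mulrAC.
have y0 v : 0 <= 2 * 1 * C%:R * l v * K by rewrite !mulr_ge0 ?ler0n.
apply: (le_trans (sum_sqrt_le V y0)).
rewrite (eq_bigr (fun v => 2 * C%:R * K * l v)) => [|v _]; last by ring.
by rewrite -mulr_sumr ler_sqrt ?mulr_ge0 ?sumr_ge0 //; lra.
Qed.

End Regret.

Theorem theorem3 (R : realType) (N C T k : nat) (x : seq 'I_N)
    (eta : seq 'I_N -> R) (f : seq 'I_N -> {set 'I_N}) (L : nat) :
  (1 <= N)%N -> (1 <= C <= N)%N -> (1 <= T)%N -> size x = T ->
  (forall h, 0 < eta h) -> sage_guarantee C eta ->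
  (forall s, #|f s| = C) ->
  is_LZ_offline_min C x L ->
  (markov_hits k f x)%:R - lz_hits C eta x
    <= delta N C (lz_nodes x)%:R L%:R + k%:R * (lz_nodes x)%:R.
Proof.
move=> _ CN _ _ _ sage fC [[g0 g0C <-] _].
set z := zip (lz_states x) x; set V := undup (lz_states x).
have uV : uniq V := undup_uniq _.
have zV : {subset unzip1 z <= V}.
  by move=> v; rewrite unzip1_zip ?size_lz_states_from // mem_undup.
pose b v := best_fixed C (substream z v).
pose l v := (size (substream z v) - b v)%N.
have markov_le : (markov_hits k f x <= \sum_(v <- V) b v + k * lz_nodes x)%N.
  apply: leq_trans (markov_hits_le_lz k f x) _; rewrite leq_add2r.
  rewrite (count_substream (fun v a => a \in f (take k (rev v))) uV zV).
  by apply: leq_sum => v _; apply/count_le_best_fixed/fC.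
have misses_ge : (\sum_(v <- V) l v <= lz_fixed_misses g0 x)%N.
  rewrite /lz_fixed_misses (count_substream (fun v a => a \notin g0 v) uV zV).
  by apply: leq_sum => v _; apply/best_fixed_misses_le/g0C.
have lz_hitsE : lz_hits C eta x = \sum_(v <- V) sage_hits C eta (substream z v).
  by rewrite (online_sum_substream (fun h a => hit_prob C (sage_marg C eta h) a) uV zV).
have K0 := lnNeC_ge0 R CN.
have regret : (\sum_(v <- V) b v)%:R - lz_hits C eta x
              <= delta N C (lz_nodes x)%:R (lz_fixed_misses g0 x)%:R.
  rewrite lz_hitsE natr_sum -sumrB.
  apply: le_trans (ler_sum _ (fun v _ => sage (substream z v))) _.
  apply: le_trans (sum_delta_le K0 _ (fun v => ler0n _ (l v))) _.
  apply: (ler_delta K0); rewrite -?natr_sum ler_nat ?size_undup_lz_states ?misses_ge andbT;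
    exact: ler0n.
move: markov_le; rewrite -(ler_nat R) natrD natrM; lra.
Qed.
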